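(* Let $(s,\pi)$ be a plane permutation on $[n]$, let $h=(i,j,j+1,l)$ with $i\le j<j+1\le l$ and $\{i,j,j+1,l\}\subset[n-1]$, and let $(s^h,\pi^h)=\chi_h\circ(s,\pi)$ (a transpose). Then the difference between the number of cycles of $\pi$ and of $\pi^h$ is even. Furthermore, each of the differences between the number of cycles, the number of odd-length cycles, and the number of even-length cycles of $\pi$ and of $\pi^h$ lies in $\{-2,0,2\}$.
   Context: Permutations of $[n]=\{1,\dots,n\}$ are multiplied as composition of maps, $(\sigma\tau)(x)=\sigma(\tau(x))$; fixed points count as cycles (of length $1$). A plane permutation on $[n]$ is a pair $(s,\pi)$ where $s=(s_0s_1\cdots s_{n-1})$ is an $n$-cycle on $[n]$, written with a fixed starting element $s_0$, and $\pi$ is an arbitrary permutation of $[n]$; its diagonal is $D=s\circ\pi^{-1}$. For $h=(i,j,k,l)$ with $i\le j<k\le l$ and $\{i,j,k,l\}\subset[n-1]$, let $s^h$ be the $n$-cycle $(s_0,\dots,s_{i-1},s_k,\dots,s_l,s_{j+1},\dots,s_{k-1},s_i,\dots,s_j,s_{l+1},\dots,s_{n-1})$ obtained by interchanging the blocks $s_i\cdots s_j$ and $s_k\cdots s_l$ (when $k=j+1$ the middle block is empty), and let $\pi^h=D^{-1}\circ s^h$. Write $(s^h,\pi^h)=\chi_h\circ(s,\pi)$. *)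

From mathcomp Require Import all_boot all_order all_algebra all_fingroup.
Set Implicit Arguments. Unset Strict Implicit. Unset Printing Implicit Defensive.

(* Ground set [n] is modelled by 'I_n (relabelling x |-> x+1).
   An n-cycle s written with fixed start s_0 is a sequence sq = [s_0;...;s_{n-1}]
   of n distinct elements; the associated permutation maps s_t to s_{t+1 mod n},
   i.e. it is the function (next sq) of path.v. *)

Definition slice (T : Type) (sq : seq T) (a b : nat) : seq T :=
  take (b.+1 - a) (drop a sq).

(* s^h for h = (i,j,k,l): interchange blocks s_i..s_j and s_k..s_l. *)
Definition block_swap (T : Type) (sq : seq T) (i j k l : nat) : seq T :=
  take i sq ++ slice sq k l ++ slice sq j.+1 k.-1 ++ slice sq i j ++ drop l.+1 sq.

Definition is_cyc_of (n : nat) (sq : seq 'I_n) (p : {perm 'I_n}) : Prop :=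
  forall x, p x = next sq x.

(* cycle statistics (fixed points count as cycles) *)
Definition ncyc (n : nat) (p : {perm 'I_n}) : nat := #|porbits p|.
Definition nodd (n : nat) (p : {perm 'I_n}) : nat :=
  #|[set c in porbits p | odd #|c|]|.
Definition neven (n : nat) (p : {perm 'I_n}) : nat :=
  #|[set c in porbits p | ~~ odd #|c|]|.

(* composition of maps: (comp f g) x = f (g x); note mathcomp's g * f is this *)
Definition compp (n : nat) (f g : {perm 'I_n}) : {perm 'I_n} := (g * f)%g.

Definition in_m202 (d : int) : bool :=
  [|| d == (-2)%R, d == 0%R | d == 2%R].

Definition zdiff (a b : nat) : int := (a%:Z - b%:Z)%R.

From mathcomp Require Import all_boot all_order all_algebra all_fingroup.
From mathcomp Require Import zify.
Set Implicit Arguments. Unset Strict Implicit. Unset Printing Implicit Defensive.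

(* Writing the n-cycle s as (A a B b C d E), the transpose s^h is the cycle
   (A a C d B b E), i.e. s^h = s o (a b d); hence
   pi^h = D^-1 o s^h = pi o (a b d) = pi o (a d) o (a b).  Composing with a
   transposition merges two cycles or splits one, which changes the number of
   cycles and the number of even cycles by exactly one, and the number of odd
   cycles by 0 or 2.  The odd count can only grow when the cycle through a is
   split from an even into odd pieces, and only shrink when two odd cycles merge
   into an even one through a; as both transpositions move a, two changes of the
   odd count in the same direction cannot occur. *)

Lemma zdiff_in_m202 a b : (a = b.+2 \/ a = b \/ b = a.+2)%N -> in_m202 (zdiff a b).
Proof.
rewrite /in_m202 /zdiff => -[->|[->|->]]; apply/or3P;
  [constructor 3 | constructor 2 | constructor 1]; apply/eqP; lia.
Qed.

Lemma in_m202_dvd2 d : in_m202 d -> (2 %| d)%Z.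
Proof. by case/or3P => /eqP ->. Qed.

Section TpermPorbits.
Local Open Scope group_scope.
Variable T : finType.
Implicit Types (s : {perm T}) (x y z : T).

Definition count_porbits (P : pred nat) s := #|[set C in porbits s | P #|C|]|.

Lemma count_porbitsE P s : count_porbits P s = (\sum_(C in porbits s) P #|C|)%N.
Proof.
rewrite /count_porbits -sum1_card big_mkcond [RHS]big_mkcond /=.
by apply: eq_bigr => C _; rewrite inE; case: (C \in _); case: (P _).
Qed.

Lemma mem_porbit_perm s x z : z \in porbit s x -> s z \in porbit s x.
Proof. by rewrite -!eq_porbit_mem; have := porbit_perm s 1 z; rewrite expg1 => ->. Qed.

Lemma porbit_subset s (Q : {set T}) x :
  x \in Q -> (forall z, z \in Q -> s z \in Q) -> porbit s x \subset Q.
Proof.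
move=> xQ sQ; apply/subsetP => _ /porbitP [i ->].
by elim: i => [|i IHi]; rewrite ?expg0 ?perm1 // expgSr permM sQ.
Qed.

Lemma disjoint_porbit s x y : x \notin porbit s y -> [disjoint porbit s x & porbit s y].
Proof.
move=> xNy; apply/pred0P => z /=; apply: contraNF xNy.
by rewrite -!eq_porbit_mem => /andP [/eqP <- /eqP <-].
Qed.

Lemma porbit_mul_tperm_out s x y z : z \notin porbit s x -> z \notin porbit s y ->
  porbit (tperm x y * s) z = porbit s z.
Proof.
move=> zNx zNy; suff exp_id i : ((tperm x y * s) ^+ i) z = (s ^+ i) z.
  by apply/porbit_setP => u; apply/porbitP/porbitP => -[i ->]; exists i.
elim: i => // i IHi; rewrite !expgSr !permM {}IHi tpermD //.
  by apply: contraNneq zNx => ->; rewrite porbit_sym mem_porbit.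
by apply: contraNneq zNy => ->; rewrite porbit_sym mem_porbit.
Qed.

Lemma mem_porbit_mul_tperm s x y :
  x \notin porbit s y -> x \in porbit (tperm x y * s) y.
Proof.
move=> xNy; have xy : x != y by apply: contraNneq xNy => ->; apply: porbit_id.
have := porbits_mul_tperm s x y; have := porbits_mul_tperm (tperm x y * s) x y.
rewrite /= tpermKg xNy xy; case: (x \in _) => //=; lia.
Qed.

Lemma notin_porbit_mul_tperm s x y : x != y ->
  x \in porbit s y -> x \notin porbit (tperm x y * s) y.
Proof.
move=> xy xy_s; have := porbits_mul_tperm s x y.
have := porbits_mul_tperm (tperm x y * s) x y.
rewrite /= tpermKg xy_s xy; case: (x \in _) => //=; lia.
Qed.

Section Merge.
Variables (s : {perm T}) (x y : T).
Hypothesis xNy : x \notin porbit s y.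
Let t := tperm x y * s.

Lemma porbit_mul_tperm_merge : porbit t x = porbit s x :|: porbit s y.
Proof.
have s_tperm z : s z = t (tperm x y z) by rewrite permM tpermK.
apply/eqP; rewrite eqEsubset; apply/andP; split.
  apply: porbit_subset => [|z]; first by rewrite inE porbit_id.
  rewrite permM !inE => /orP z_xy.
  case: tpermP => [_|_|_ _]; first by rewrite (mem_porbit_perm (porbit_id s y)) orbT.
    by rewrite (mem_porbit_perm (porbit_id s x)).
  by case: z_xy => /mem_porbit_perm ->; rewrite ?orbT.
have t_closed z : z \in porbit t x -> s z \in porbit t x.
  move=> zx; rewrite s_tperm mem_porbit_perm //.
  by case: tpermP => [_|_|_ _] //; rewrite ?porbit_id // porbit_sym mem_porbit_mul_tperm.
apply/subsetP => z; rewrite inE => /orP [] zP; apply: (subsetP (porbit_subset _ t_closed)) zP.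
  exact: porbit_id.
by rewrite porbit_sym mem_porbit_mul_tperm.
Qed.

Lemma card_porbit_mul_tperm_merge : #|porbit t x| = #|porbit s x| + #|porbit s y|.
Proof.
by rewrite porbit_mul_tperm_merge cardsU (disjoint_setI0 (disjoint_porbit xNy)) cards0 subn0.
Qed.

Lemma porbits_mul_tperm_merge :
  porbits t = (porbit s x :|: porbit s y) |: (porbits s :\ porbit s x :\ porbit s y).
Proof.
apply/setP => C; apply/imsetP/idP => [[z _ ->]|].
  have [zxy|] := boolP (z \in porbit s x :|: porbit s y).
    rewrite -porbit_mul_tperm_merge -eq_porbit_mem in zxy.
    by rewrite (eqP zxy) porbit_mul_tperm_merge setU11.
  rewrite inE negb_or => /andP [zNx zNy].
  by rewrite porbit_mul_tperm_out // !inE !eq_porbit_mem zNx zNy imset_f ?orbT.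
rewrite !inE => /orP [/eqP ->|/and3P [+ + /imsetP [z _ eC]]].
  by exists x; rewrite ?porbit_mul_tperm_merge.
by rewrite eC !eq_porbit_mem => zNy zNx; exists z; rewrite ?porbit_mul_tperm_out.
Qed.

Lemma count_porbits_mul_tperm_merge P :
  count_porbits P t + P #|porbit s x| + P #|porbit s y| =
  count_porbits P s + P (#|porbit s x| + #|porbit s y|).
Proof.
set Cx := porbit s x; set Cy := porbit s y; set R := porbits s :\ Cx :\ Cy.
have CxNy : Cx != Cy by rewrite eq_porbit_mem.
have sE : porbits s = Cx |: (Cy |: R).
  by rewrite setD1K ?setD1K ?imset_f // 2!inE eq_sym CxNy imset_f.
have CxyNR : Cx :|: Cy \notin R.
  apply/negP; rewrite !inE => /and3P [_ + /imsetP [z _ eC]].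
  by rewrite eC eq_porbit_mem porbit_sym -eC inE porbit_id.
rewrite !count_porbitsE porbits_mul_tperm_merge -/Cx -/Cy -/R [in RHS]sE.
rewrite big_setU1 //= -porbit_mul_tperm_merge card_porbit_mul_tperm_merge.
rewrite !big_setU1 ?inE ?negb_or ?eqxx ?andbF ?CxNy //= -/Cx -/Cy; lia.
Qed.
End Merge.

Lemma mul_tperm_merge_or_split s x y : x != y ->
  x \notin porbit s y \/ x \notin porbit (tperm x y * s) y.
Proof.
by move=> xy; case: (boolP (x \in _)) => [/(notin_porbit_mul_tperm xy)|]; [right|left].
Qed.

Lemma card_porbits_mul_tperm_step s x y : x != y ->
  #|porbits (tperm x y * s)| = #|porbits s|.+1 \/
  #|porbits s| = #|porbits (tperm x y * s)|.+1.
Proof.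
by move=> xy; have := porbits_mul_tperm s x y; rewrite /= xy; case: (x \in _) => /=; lia.
Qed.

Lemma count_even_porbits_mul_tperm s x y : x != y ->
  count_porbits (fun k => ~~ odd k) (tperm x y * s) =
    (count_porbits (fun k => ~~ odd k) s).+1 \/
  count_porbits (fun k => ~~ odd k) s =
    (count_porbits (fun k => ~~ odd k) (tperm x y * s)).+1.
Proof.
move=> xy; wlog xNy : s / x \notin porbit s y.
  move=> IH; have [|/IH] := mul_tperm_merge_or_split s xy; first exact: IH.
  by rewrite tpermKg; case; [right|left].
have := count_porbits_mul_tperm_merge xNy (fun k => ~~ odd k); rewrite /= oddD; lia.
Qed.

Lemma count_odd_porbits_mul_tperm s x y : x != y ->
  let t := tperm x y * s in
  count_porbits odd t = count_porbits odd s \/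
  count_porbits odd t = (count_porbits odd s).+2 /\
    ~~ odd #|porbit s x| /\ odd #|porbit t x| \/
  count_porbits odd s = (count_porbits odd t).+2 /\
    ~~ odd #|porbit t x| /\ odd #|porbit s x|.
Proof.
move=> xy t; wlog xNy : s @t / x \notin porbit s y.
  move=> IH; have [|/IH] := mul_tperm_merge_or_split s xy; first exact: IH.
  by rewrite /t tpermKg; case=> [->|[]]; auto.
have := count_porbits_mul_tperm_merge xNy odd.
rewrite /t card_porbit_mul_tperm_merge // oddD; lia.
Qed.

Lemma card_porbits_mul_tperm2 s x y u v : x != y -> u != v ->
  in_m202 (zdiff #|porbits s| #|porbits (tperm u v * (tperm x y * s))|).
Proof.
move=> xy uv; apply: zdiff_in_m202.
have := card_porbits_mul_tperm_step s xy.
by have := card_porbits_mul_tperm_step (tperm x y * s) uv; lia.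
Qed.

Lemma count_even_porbits_mul_tperm2 s x y u v : x != y -> u != v ->
  in_m202 (zdiff (count_porbits (fun k => ~~ odd k) s)
                 (count_porbits (fun k => ~~ odd k) (tperm u v * (tperm x y * s)))).
Proof.
move=> xy uv; apply: zdiff_in_m202; have := count_even_porbits_mul_tperm s xy.
by have := count_even_porbits_mul_tperm (tperm x y * s) uv; lia.
Qed.

Lemma count_odd_porbits_mul_tperm2 s x y z : x != y -> x != z ->
  in_m202 (zdiff (count_porbits odd s) (count_porbits odd (tperm x z * (tperm x y * s)))).
Proof.
move=> xy xz; apply: zdiff_in_m202.
have := count_odd_porbits_mul_tperm s xy.
by have := count_odd_porbits_mul_tperm (tperm x y * s) xz; lia.
Qed.
End TpermPorbits.

Section NextBlockSwap.
Variable T : eqType.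
Implicit Types (P Q X : seq T) (a b d e z : T).

Lemma next_cat_cons P Q z : uniq (P ++ z :: Q) -> next (P ++ z :: Q) z = head (head z P) Q.
Proof.
move=> uPQ; rewrite -(next_rot (size P) uPQ) rot_size_cat next_nth mem_head /= eqxx.
by case: Q uPQ.
Qed.

Lemma next_cat_in P X Q e z : uniq (P ++ X ++ e :: Q) -> z \in X ->
  next (P ++ X ++ e :: Q) z = next (X ++ [:: e]) z.
Proof.
move=> uPXQ zX; case/splitPr: zX uPXQ => X1 X2 uPXQ.
have uXe : uniq ((X1 ++ z :: X2) ++ [:: e]).
  apply: subseq_uniq uPXQ; apply: subseq_trans (suffix_subseq P _).
  by apply: cat_subseq => //; apply: prefix_subseq [:: e] Q.
rewrite -!catA /= catA in uPXQ *; rewrite -catA in uXe.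
by rewrite !next_cat_cons //; case: X2 {uXe uPXQ}.
Qed.

Lemma next_cat_inE W P X Q e z : W = P ++ X ++ e :: Q -> uniq W -> z \in X ->
  next W z = next (X ++ [:: e]) z.
Proof. by move=> ->; apply: next_cat_in. Qed.

Lemma next_catE W P Q z : W = P ++ z :: Q -> uniq W -> next W z = head (head z P) Q.
Proof. by move=> ->; apply: next_cat_cons. Qed.

Lemma head_cat_cons x0 P y Q : head x0 (P ++ y :: Q) = head y P.
Proof. by case: P. Qed.

Lemma perm_swap_blocks X Y W x y : perm_eq (X ++ x :: Y ++ y :: W) (Y ++ y :: X ++ x :: W).
Proof. by apply/seq.permP => p; rewrite !count_cat /= !count_cat /=; lia. Qed.

Lemma next_swap_blocks B C R a b d :
  uniq (B ++ b :: C ++ d :: R ++ [:: a]) ->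
  next (C ++ d :: B ++ b :: R ++ [:: a]) =1
  next (B ++ b :: C ++ d :: R ++ [:: a]) \o next [:: a; b; d].
Proof.
set U := B ++ _; set V := C ++ _ => uU z /=.
have UV : perm_eq U V := perm_swap_blocks _ _ _ _ _.
have uV : uniq V by rewrite -(perm_uniq UV).
have [->|za] := eqVneq z a.
  rewrite (@next_catE V (C ++ d :: B ++ b :: R) [::])
    ?(@next_catE U B (C ++ d :: R ++ [:: a])) ?head_cat_cons //;
    by rewrite !(cat_cons, =^~ catA).
have [->|zb] := eqVneq z b.
  rewrite (@next_catE V (C ++ d :: B) (R ++ [:: a]))
    ?(@next_catE U (B ++ b :: C) (R ++ [:: a])) ?head_cat_cons //;
    by rewrite !(cat_cons, =^~ catA).
have [->|zd] := eqVneq z d.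
  rewrite (@next_catE V C (B ++ b :: R ++ [:: a]))
    ?(@next_catE U (B ++ b :: C ++ d :: R) [::]) ?head_cat_cons //;
    by rewrite !(cat_cons, =^~ catA).
have [zU|zNU] := boolP (z \in U); last by rewrite !next_nth -(perm_mem UV) (negPf zNU).
move: zU; rewrite /U !(mem_cat, inE) (negPf za) (negPf zb) (negPf zd) /= orbF => /or3P [] zX.
- rewrite (@next_cat_inE V (C ++ [:: d]) B (R ++ [:: a]) b)
    ?(@next_cat_inE U [::] B (C ++ d :: R ++ [:: a]) b) //;
    by rewrite !(cat_cons, =^~ catA).
- rewrite (@next_cat_inE V [::] C (B ++ b :: R ++ [:: a]) d)
    ?(@next_cat_inE U (B ++ [:: b]) C (R ++ [:: a]) d) //;
    by rewrite !(cat_cons, =^~ catA).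
- rewrite (@next_cat_inE V (C ++ d :: B ++ [:: b]) R [::] a)
    ?(@next_cat_inE U (B ++ b :: C ++ [:: d]) R [::] a) //;
    by rewrite !(cat_cons, =^~ catA).
Qed.

Lemma subseq_cons_cat X x Y s : subseq s Y -> subseq (x :: s) (X ++ x :: Y).
Proof. by move=> sY; apply: subseq_trans (suffix_subseq X _); rewrite /= eqxx. Qed.

Lemma next_swap_adjacent_blocks A B C E a b d :
  uniq (A ++ a :: B ++ b :: C ++ d :: E) ->
  next (A ++ a :: C ++ d :: B ++ b :: E) =1
  next (A ++ a :: B ++ b :: C ++ d :: E) \o next [:: a; b; d].
Proof.
move=> uU z.
have UV : perm_eq (A ++ a :: B ++ b :: C ++ d :: E) (A ++ a :: C ++ d :: B ++ b :: E).
  by rewrite perm_cat2l perm_cons perm_swap_blocks.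
have uV : uniq (A ++ a :: C ++ d :: B ++ b :: E) by rewrite -(perm_uniq UV).
have rotE X : rot (size A).+1 (A ++ a :: X) = X ++ A ++ [:: a].
  by rewrite -cat_rcons -(size_rcons A a) rot_size_cat cats1.
(* Rotating both cycles to start right after [a] reduces to [R := E ++ A]. *)
rewrite /= -(next_rot (size A).+1 uU) -(next_rot (size A).+1 uV) !rotE.
rewrite -(rot_uniq (size A).+1) rotE in uU.
by rewrite !(cat_cons, =^~ catA) catA in uU *; apply: next_swap_blocks.
Qed.

End NextBlockSwap.

Lemma next3_tperm (T : finType) (a b d : T) : uniq [:: a; b; d] ->
  next [:: a; b; d] =1 (tperm a b * tperm a d)%g.
Proof.
rewrite /= !inE negb_or => /and3P [/andP [ab ad] bd _] z; rewrite permM /=.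
have [->|za] := eqVneq z a; first by rewrite tpermL tpermD // eq_sym.
have [->|zb] := eqVneq z b; first by rewrite tpermR tpermL.
have [->|zd] := eqVneq z d; first by rewrite (tpermD ad bd) tpermR.
by rewrite !tpermD // eq_sym.
Qed.

Section BlockSwap.
Variable T : Type.
Implicit Types s : seq T.

Lemma slice_cat_drop s i j : i <= j.+1 -> slice s i j ++ drop j.+1 s = drop i s.
Proof.
move=> le_ij; have -> : drop j.+1 s = drop (j.+1 - i) (drop i s) by rewrite drop_drop subnK.
exact: cat_take_drop.
Qed.

Lemma size_slice s i j : i <= j < size s -> size (slice s i j) = j.+1 - i.
Proof. by move=> /andP [le_ij lt_js]; rewrite size_takel // size_drop; lia. Qed.

Lemma block_swap_adjacent s i j l : 0 < i -> i <= j -> j < l -> l < size s ->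
  exists A a B b C d E, s = A ++ a :: B ++ b :: C ++ d :: E /\
    block_swap s i j j.+1 l = A ++ a :: C ++ d :: B ++ b :: E.
Proof.
move=> i_gt0 le_ij lt_jl lt_ls.
have rconsP (x : seq T) : 0 < size x -> exists x' y, x = rcons x' y.
  by case/lastP: x => // x' y; exists x', y.
have [A [a eA]] : exists A a, take i s = rcons A a.
  by apply: rconsP; rewrite size_takel; lia.
have [B [b eB]] : exists B b, slice s i j = rcons B b.
  by apply: rconsP; rewrite size_slice; lia.
have [C [d eC]] : exists C d, slice s j.+1 l = rcons C d.
  by apply: rconsP; rewrite size_slice; lia.
exists A, a, B, b, C, d, (drop l.+1 s); rewrite -!cat_rcons -eA -eB -eC; split.
  by rewrite slice_cat_drop 1?slice_cat_drop ?cat_take_drop //; lia.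
by rewrite /block_swap [slice s j.+1 j]/slice subnn take0.
Qed.

End BlockSwap.

Theorem lemma3 (n : nat) (sq : seq 'I_n) (s pi sh : {perm 'I_n}) (i j l : nat) :
  size sq = n -> uniq sq -> is_cyc_of sq s ->
  1 <= i -> i <= j -> j.+1 <= l -> l <= n.-1 ->
  is_cyc_of (block_swap sq i j j.+1 l) sh ->
  let D := compp s (pi^-1)%g in
  let pih := compp (D^-1)%g sh in
  (2 %| zdiff (ncyc pi) (ncyc pih))%Z /\
  in_m202 (zdiff (ncyc pi) (ncyc pih)) /\
  in_m202 (zdiff (nodd pi) (nodd pih)) /\
  in_m202 (zdiff (neven pi) (neven pih)).
Proof.
move=> size_sq uniq_sq s_sq i_gt0 le_ij lt_jl le_ln sh_sq D pih.
have lt_l_sq : l < size sq by rewrite size_sq; lia.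
have [A [a [B [b [C [d [E [sqE swapE]]]]]]]] := block_swap_adjacent i_gt0 le_ij lt_jl lt_l_sq.
have uU : uniq (A ++ a :: B ++ b :: C ++ d :: E) by rewrite -sqE.
have uabd : uniq [:: a; b; d].
  by apply: subseq_uniq uU; do 3!apply: subseq_cons_cat; apply: sub0seq.
have shE : sh = (tperm a b * tperm a d * s)%g.
  apply/permP => z; rewrite sh_sq swapE next_swap_adjacent_blocks // -sqE.
  by rewrite permM -(next3_tperm uabd) s_sq.
have pihE : pih = (tperm a b * (tperm a d * pi))%g.
  by rewrite /pih /compp /D shE invMg invgK !mulgA mulgK.
move: uabd; rewrite pihE /= !inE negb_or => /and3P [/andP [ab ad] _ _].
have ncyc_m202 := card_porbits_mul_tperm2 pi ad ab.
split; first exact: in_m202_dvd2.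
split; first exact: ncyc_m202.
split; [exact: count_odd_porbits_mul_tperm2 | exact: count_even_porbits_mul_tperm2].
Qed.
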